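(* Let $\Gamma$ be a commutative topological group and let $(X,\Gamma)$ be a minimal, weakly mixing, metric, tame dynamical system. Then $X$ is a single point.
   Context: A dynamical system $(X,\Gamma)$: compact Hausdorff $X$ with continuous action of $\Gamma$; metric means $X$ metrizable. $E(X,\Gamma)$ is the pointwise closure in $X^X$ of $\{x\mapsto\gamma x\}$; $(X,\Gamma)$ is tame if $E(X,\Gamma)$ is separable and Fréchet (every point in the closure of a set is a limit of a sequence from it). Weakly mixing: the product system $(X\times X,\Gamma)$ with diagonal action is topologically transitive. *)

From HB Require Import structures.
From mathcomp Require Import all_boot all_order all_algebra.
From mathcomp Require Import all_classical all_reals all_analysis.
From mathcomp Require Import Rstruct Rstruct_topology.
From Stdlib Require Import Rdefinitions.

Set Implicit Arguments.
Unset Strict Implicit.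
Unset Printing Implicit Defensive.

Import Order.TTheory GRing.Theory Num.Theory.
Local Open Scope classical_set_scope.
Local Open Scope ring_scope.

Definition is_action (G : topologicalZmodType) (X : topologicalType)
  (act : G -> X -> X) : Prop :=
  [/\ forall x, act 0 x = x,
      forall g h x, act (g + h) x = act g (act h x) &
      continuous (fun p : G * X => act p.1 p.2)].

Definition metrizable (X : topologicalType) : Prop :=
  exists d : X -> X -> R,
    [/\ forall x y, (0 <= d x y)%R,
        forall x y, d x y = 0%R <-> x = y,
        forall x y, d x y = d y x,
        forall x y z, (d x z <= d x y + d y z)%R &
        forall A : set X,
          open A <-> (forall x, A x -> exists2 e : R, (0 < e)%R &
                        [set y | (d x y < e)%R] `<=` A)].

Definition minimal_system (G : topologicalZmodType) (X : topologicalType)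
  (act : G -> X -> X) : Prop :=
  forall A : set X, closed A -> (forall g x, A x -> A (act g x)) ->
    A = set0 \/ A = setT.

Definition top_transitive (G : topologicalZmodType) (Y : topologicalType)
  (act : G -> Y -> Y) : Prop :=
  forall U V : set Y, open U -> open V -> U !=set0 -> V !=set0 ->
    exists g : G, (act g @` U) `&` V !=set0.

Definition diag_act (G : topologicalZmodType) (X : topologicalType)
  (act : G -> X -> X) (g : G) (p : X * X) : X * X :=
  (act g p.1, act g p.2).

Definition weakly_mixing (G : topologicalZmodType) (X : topologicalType)
  (act : G -> X -> X) : Prop :=
  top_transitive (diag_act act).

Definition enveloping (G : topologicalZmodType) (X : topologicalType)
  (act : G -> X -> X) : set {ptws X -> X} :=
  closure (range (fun g : G => (act g : {ptws X -> X}))).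

Definition separable_set (T : topologicalType) (E : set T) : Prop :=
  exists2 D : set T, D `<=` E /\ countable D & E `<=` closure D.

Definition frechet_set (T : topologicalType) (E : set T) : Prop :=
  forall (A : set T) (f : T), A `<=` E -> E f -> closure A f ->
    exists u : nat -> T, (forall n, A (u n)) /\ u @ \oo --> f.

Definition tame (G : topologicalZmodType) (X : topologicalType)
  (act : G -> X -> X) : Prop :=
  separable_set (enveloping act) /\ frechet_set (enveloping act).

(* Weak mixing gives a pair (x, y) whose orbit is dense in X * X, so there are
   g_n with g_n x -> x and g_n y -> x. A cluster point p of the g_n in X^X
   lies in the enveloping semigroup, and since the latter is Frechet, p is
   the pointwise limit of a sequence of translations. Hence p is a Baire-one
   map, has a point of continuity c, commutes with the abelian action, and
   identifies x and y. Approximating (c, g c) by (h x, h y) and using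
   p (h x) = h (p x) = h (p y) = p (h y) gives p c = g (p c) for every g, so
   p c is a fixed point and, by minimality, X = {p c}. *)

From mathcomp Require Import all_boot all_order all_algebra.
From mathcomp Require Import all_classical all_reals all_analysis.
From mathcomp Require Import Rstruct Rstruct_topology lra.
From Stdlib Require Import Rdefinitions.

Set Implicit Arguments.
Unset Strict Implicit.
Unset Printing Implicit Defensive.

Import Order.TTheory GRing.Theory Num.Theory.
Local Open Scope classical_set_scope.
Local Open Scope ring_scope.

Section NestedBalls.
Variables (T : Type) (D : T -> T -> R).
Hypothesis D_refl : forall x, D x x = 0.
Hypothesis D_complete : forall (a : nat -> T) (r : nat -> R),
  (forall n m, (n <= m)%nat -> D (a n) (a m) <= r n) ->
  exists z, forall n, D (a n) z <= r n.

Lemma nested_balls (P : nat -> T -> R -> Prop) a0 r0 : 0 < r0 ->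
  (forall n a r, 0 < r -> (forall w, D a w <= r -> D a0 w <= r0) ->
     exists a' r', [/\ 0 < r', (forall w, D a' w <= r' -> D a w <= r) & P n a' r']) ->
  exists z, forall n, exists a r, [/\ 0 < r, P n a r & D a z <= r].
Proof.
move=> r0_gt0 shrink.
pose inside a r := 0 < r /\ forall w, D a w <= r -> D a0 w <= r0.
have : forall nb : nat * (T * R), exists b : T * R, inside nb.2.1 nb.2.2 ->
    [/\ inside b.1 b.2, (forall w, D b.1 w <= b.2 -> D nb.2.1 w <= nb.2.2)
      & P nb.1 b.1 b.2].
  move=> [n [a r]] /=; have [[r_gt0 sub]|] := pselect (inside a r); last first.
    by exists (a0, r0).
  have [a' [r' [r'_gt0 sub' Pa']]] := shrink n a r r_gt0 sub.
  by exists (a', r') => _; split=> //; split=> // w /sub' /sub.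
move=> /choice [next nextP].
pose ball := fix ball n := if n is n'.+1 then next (n', ball n') else (a0, r0).
have inside_ball n : inside (ball n).1 (ball n).2.
  by elim: n => [|n IH] //; have [] := nextP (n, ball n) IH.
have ball_sub n m : (n <= m)%nat ->
    forall w, D (ball m).1 w <= (ball m).2 -> D (ball n).1 w <= (ball n).2.
  elim: m => [|m IH]; first by rewrite leqn0 => /eqP ->.
  rewrite leq_eqVlt => /orP [/eqP -> //|/IH nm w Hw]; apply: nm.
  by have [_ sub _] := nextP (m, ball m) (inside_ball m); exact: sub.
have [z Hz] : exists z, forall n, D (ball n).1 z <= (ball n).2.
  apply: D_complete => n m nm; apply: ball_sub nm _ _.
  by rewrite D_refl; exact: ltW (inside_ball m).1.
exists z => n; exists (ball n.+1).1, (ball n.+1).2.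
split; [exact: (inside_ball n.+1).1 | | exact: Hz].
by have [] := nextP (n, ball n) (inside_ball n).
Qed.

End NestedBalls.

Lemma open_setX (T1 T2 : topologicalType) (U : set T1) (V : set T2) :
  open U -> open V -> open (U `*` V).
Proof.
move=> oU oV; rewrite openE => -[u v] [/= Uu Vv].
by exists (U, V) => //; split; exact: open_nbhs_nbhs.
Qed.

Section MetricSpace.
Variables (X : topologicalType) (d : X -> X -> R).
Hypothesis d_ge0 : forall x y, 0 <= d x y.
Hypothesis d_eq0 : forall x y, d x y = 0 <-> x = y.
Hypothesis d_sym : forall x y, d x y = d y x.
Hypothesis d_tri : forall x y z, d x z <= d x y + d y z.
Hypothesis d_open : forall A : set X,
  open A <-> (forall x, A x -> exists2 e, 0 < e & [set y | d x y < e] `<=` A).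

Lemma dist_refl x : d x x = 0.
Proof. exact/d_eq0. Qed.

Lemma dist_lt_eq x y : (forall e, 0 < e -> d x y < e) -> x = y.
Proof.
move=> small; apply/d_eq0/le_anti; rewrite d_ge0 andbT.
by apply/ler_addgt0Pr => e e_gt0; rewrite add0r ltW ?small.
Qed.

Lemma open_ball c e : open [set y | d c y < e].
Proof.
apply/d_open => x /= cx; exists (e - d c x); first lra.
by move=> y /= xy; have := d_tri c x y; lra.
Qed.

Lemma nbhs_ballP z A :
  nbhs z A <-> exists2 e, 0 < e & [set y | d z y < e] `<=` A.
Proof.
rewrite nbhsE /=; split.
  move=> [B [oB Bz] BA]; have [e e_gt0 Be] := (d_open B).1 oB z Bz.
  by exists e => // y /Be /BA.
move=> [e e_gt0 eA]; exists [set y | d z y < e] => //; split.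
  exact: open_ball.
by rewrite /= dist_refl.
Qed.

Lemma continuous_dist (f : X -> X) z : {for z, continuous f} ->
  forall e, 0 < e -> exists2 r, 0 < r & forall w, d z w < r -> d (f z) (f w) < e.
Proof.
move=> fz e e_gt0.
have /fz /nbhs_ballP [r r_gt0 rB] : nbhs (f z) [set y | d (f z) y < e].
  by apply/nbhs_ballP; exists e.
by exists r.
Qed.

Definition ptws_limit (f : nat -> X -> X) (p : X -> X) :=
  forall t e, 0 < e -> exists N, forall n, (N <= n)%nat -> d (p t) (f n t) < e.

Lemma nbhs_ptws_ball (f : {ptws X -> X}) t e : 0 < e ->
  nbhs f [set g : {ptws X -> X} | d (f t) (g t) < e].
Proof.
move=> e_gt0; have : nbhs (f t) [set y | d (f t) y < e].
  by apply/nbhs_ballP; exists e.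
by move=> /(@proj_continuous X (fun _ => X) t f).
Qed.

Lemma ptws_cvg_limit (u : nat -> {ptws X -> X}) (p : {ptws X -> X}) :
  u @ \oo --> p -> ptws_limit u p.
Proof.
by move=> u_p t e e_gt0; have [N _ NP] := u_p _ (nbhs_ptws_ball p t e_gt0); exists N.
Qed.

Lemma ptws_cluster_eq (u : nat -> {ptws X -> X}) (p : {ptws X -> X}) w x :
  cluster (u @ \oo) p -> (forall n, d x (u n w) < n.+1%:R^-1) -> p w = x.
Proof.
move=> p_cluster uw; apply: dist_lt_eq => e e_gt0.
have [N _ NP] := near_infty_natSinv_lt (PosNum (ltac:(lra) : 0 < e / 2)).
have tail_N : (u @ \oo) (u @` [set n | (N <= n)%nat]) by exists N => // n ?; exists n.
have [_ [[n /= Nn <-] /= pn]] :=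
  p_cluster _ _ tail_N (nbhs_ptws_ball p w (ltac:(lra) : 0 < e / 2)).
have := uw n; rewrite d_sym => un.
rewrite [e]splitr; apply: le_lt_trans (d_tri _ (u n w) _) _.
by apply: ltrD => //; apply: lt_trans un (NP n Nn).
Qed.

Section Compact.
Hypothesis X_compact : compact [set: X].

Lemma compact_cluster (a : nat -> X) :
  exists z, forall N e, 0 < e -> exists2 m, (N <= m)%nat & d z (a m) < e.
Proof.
have [z [_ za]] :=
  X_compact (fmap_proper_filter a eventually_filter) filterT.
exists z => N e e_gt0.
have /za : (a @ \oo) (a @` [set m | (N <= m)%nat]) by exists N => // m /= ?; exists m.
have /[swap] /[apply] : nbhs z [set y | d z y < e] by apply/nbhs_ballP; exists e.
by move=> [_ [[m /= Nm <-] /= zm]]; exists m.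
Qed.

Lemma compact_nested_cvg (a : nat -> X) (r : nat -> R) :
  (forall n m, (n <= m)%nat -> d (a n) (a m) <= r n) ->
  exists z, forall n, d (a n) z <= r n.
Proof.
move=> a_nested; have [z za] := compact_cluster a.
exists z => n; apply/ler_addgt0Pr => e e_gt0.
have [m nm zm] := za n e e_gt0.
by have := a_nested n m nm; have := d_tri (a n) (a m) z; rewrite (d_sym z) in zm; lra.
Qed.

Lemma compact_finite_net x0 e : 0 < e ->
  exists l : seq X, forall z, exists i, d (nth x0 l i) z < e.
Proof.
move=> e_gt0; apply: contrapT => no_net.
have /choice [far farP] : forall l : seq X, exists z, forall i, e <= d (nth x0 l i) z.
  move=> l; apply: contrapT => /forallNP l_net; apply: no_net; exists l => z.
  by have /existsNP [i /negP] := l_net z; rewrite -ltNge => lt; exists i.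
pose L := fix L n := if n is n'.+1 then rcons (L n') (far (L n')) else [::].
have size_L n : size (L n) = n by elim: n => //= n IH; rewrite size_rcons IH.
have nth_L n i : (i < n)%nat -> nth x0 (L n) i = far (L i).
  elim: n => // n IH; rewrite ltnS leq_eqVlt /= nth_rcons size_L.
  by case/orP => [/eqP ->|lt]; rewrite ?ltnn ?eqxx // lt IH.
have [z zP] := compact_cluster (fun n => far (L n)).
have [m1 _ z1] := zP 0%nat _ (ltac:(lra) : 0 < e / 2).
have [m2 lt z2] := zP m1.+1 _ (ltac:(lra) : 0 < e / 2).
have := farP (L m2) m1; rewrite nth_L //.
by have := d_tri (far (L m1)) z (far (L m2)); rewrite d_sym in z1; lra.
Qed.

Lemma ptws_compact : compact [set: {ptws X -> X}].
Proof.
have := @tychonoff X (fun _ => X) (fun _ => [set: X]) (fun _ => X_compact).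
by congr compact; apply/seteqP; split.
Qed.

Section BaireOne.
Variables (f : nat -> X -> X) (p : X -> X).
Hypothesis f_cont : forall n, continuous (f n).
Hypothesis f_p : ptws_limit f p.

Definition stable_from eta N w :=
  forall m, (N <= m)%nat -> d (f m w) (f N w) <= eta.

Lemma ptws_limit_stable eta N w : stable_from eta N w -> d (p w) (f N w) <= eta.
Proof.
move=> w_stable; apply/ler_addgt0Pr => e e_gt0.
have [M MP] := f_p w e_gt0.
have := MP (maxn N M) (leq_maxr _ _); have := w_stable (maxn N M) (leq_maxl _ _).
by have := d_tri (p w) (f (maxn N M) w) (f N w); lra.
Qed.

Lemma unstable_ball eta N w0 : ~ stable_from eta N w0 ->
  exists2 t, 0 < t & forall w, d w0 w < t -> ~ stable_from eta N w.
Proof.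
move=> /existsNP [m /not_implyP [Nm /negP]]; rewrite -ltNge => far.
have k_gt0 : 0 < (d (f m w0) (f N w0) - eta) / 2 by lra.
have [tm tm_gt0 tmP] := continuous_dist (@f_cont m w0) k_gt0.
have [tN tN_gt0 tNP] := continuous_dist (@f_cont N w0) k_gt0.
exists (Num.min tm tN); first by rewrite lt_min tm_gt0.
move=> w; rewrite lt_min => /andP [/tmP wm /tNP wN] /(_ m Nm).
rewrite d_sym in wN.
by have := d_tri (f m w0) (f m w) (f N w0); have := d_tri (f m w) (f N w) (f N w0); lra.
Qed.

(* The sets [stable_from eta N] are closed and cover X; this is the Baire
   category argument showing that one of them has interior in every ball. *)
Lemma stable_from_ball eta a r : 0 < eta -> 0 < r ->
  exists N a' r', [/\ 0 < r', (forall w, d a' w <= r' -> d a w <= r)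
    & forall w, d a' w <= r' -> stable_from eta N w].
Proof.
move=> eta_gt0 r_gt0; apply: contrapT => no_ball.
have shrink N b t : 0 < t -> (forall w, d b w <= t -> d a w <= r) ->
    exists b' t', [/\ 0 < t', (forall w, d b' w <= t' -> d b w <= t)
      & forall w, d b' w <= t' -> ~ stable_from eta N w].
  move=> t_gt0 bt_sub.
  have [w0 [bw0 w0_unstable]] :
      exists w0, d b w0 <= t / 2 /\ ~ stable_from eta N w0.
    apply: contrapT => /forallNP all_stable; apply: no_ball; exists N, b, (t / 2).
    split; [lra | by move=> w bw; apply: bt_sub; lra |].
    by move=> w bw; have /not_andP [//|/contrapT] := all_stable w.
  have [s s_gt0 sP] := unstable_ball w0_unstable.
  exists w0, (Num.min (s / 2) (t / 2)); split.
  - by rewrite lt_min; apply/andP; split; lra.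
  - by move=> w; rewrite le_min => /andP [_ wt]; have := d_tri b w0 w; lra.
  - by move=> w; rewrite le_min => /andP [ws _]; apply: sP; lra.
have [z zP] := @nested_balls _ d dist_refl (@compact_nested_cvg)
  (fun N b t => forall w, d b w <= t -> ~ stable_from eta N w) a r r_gt0 shrink.
have [N NP] := f_p z (ltac:(lra) : 0 < eta / 2).
have [b [t [_ b_unstable bz]]] := zP N.
apply: (b_unstable z bz) => m Nm.
have := NP m Nm; have := NP N (leqnn N).
by have := d_tri (f m z) (p z) (f N z); rewrite (d_sym _ (p z)); lra.
Qed.

Lemma small_oscillation_ball eps a r : 0 < eps -> 0 < r ->
  exists a' r', [/\ 0 < r', (forall w, d a' w <= r' -> d a w <= r)
    & forall w w', d a' w <= 2 * r' -> d a' w' <= 2 * r' ->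
        d (p w) (p w') <= eps].
Proof.
move=> eps_gt0 r_gt0.
have [N [a' [s [s_gt0 sub stable]]]] := stable_from_ball a (ltac:(lra) : 0 < eps / 4) r_gt0.
have [t t_gt0 tP] := continuous_dist (@f_cont N a') (ltac:(lra) : 0 < eps / 4).
pose q := Num.min (s / 2) (t / 4).
have [qs qt] : q <= s / 2 /\ q <= t / 4 by rewrite /q !ge_min !lexx ?orbT.
exists a', q; split.
- by rewrite lt_min; apply/andP; split; lra.
- by move=> w aw; apply: sub; lra.
move=> w w' aw aw'.
have := ptws_limit_stable (stable w ltac:(lra)).
have := ptws_limit_stable (stable w' ltac:(lra)).
have := tP w ltac:(lra); have := tP w' ltac:(lra).
have := d_tri (p w) (f N w) (p w'); have := d_tri (f N w) (f N a') (p w').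
have := d_tri (f N a') (f N w') (p w').
by rewrite (d_sym (f N w) (f N a')) (d_sym (f N w') (p w')); lra.
Qed.

Lemma baire_one_continuity_point (x0 : X) : exists c, {for c, continuous p}.
Proof.
have [c cP] := @nested_balls _ d dist_refl (@compact_nested_cvg)
  (fun k b t => forall w w', d b w <= 2 * t -> d b w' <= 2 * t ->
     d (p w) (p w') <= k.+1%:R^-1)
  x0 1 ltr01 (fun k b t t_gt0 _ =>
    small_oscillation_ball b (ltac:(by rewrite invr_gt0 ltr0n) : 0 < k.+1%:R^-1) t_gt0).
exists c => A /nbhs_ballP [e e_gt0 eA]; apply/nbhs_ballP.
have [k _ kP] := near_infty_natSinv_lt (PosNum e_gt0).
have [b [t [t_gt0 osc bc]]] := cP k.
exists t => // w /= cw; apply: eA => /=.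
apply: le_lt_trans (kP k (leqnn k)).
by apply: osc; [lra | have := d_tri b c w; lra].
Qed.

End BaireOne.

Section Action.
Variables (G : topologicalZmodType) (act : G -> X -> X).
Hypothesis act0 : forall x, act 0 x = x.
Hypothesis actD : forall g h x, act (g + h) x = act g (act h x).
Hypothesis act_cont : continuous (fun q : G * X => act q.1 q.2).

Lemma act_continuous g : continuous (act g).
Proof.
move=> z.
apply: (@continuous_comp _ _ _ (fun x => (g, x)) (fun q : G * X => act q.1 q.2)).
  by apply: cvg_pair; [exact: cvg_cst|exact: cvg_id].
exact: act_cont.
Qed.

Definition diag_orbit_dense x y := forall z1 z2 e, 0 < e ->
  exists h, d z1 (act h x) < e /\ d z2 (act h y) < e.

Let dmax (p q : X * X) := Num.max (d p.1 q.1) (d p.2 q.2).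

Lemma weakly_mixing_refine a r c1 c2 s : weakly_mixing act -> 0 < r -> 0 < s ->
  exists a' r', [/\ 0 < r', (forall w, dmax a' w <= r' -> dmax a w <= r)
    & exists h, forall w, dmax a' w <= r' ->
        d c1 (act h w.1) < s /\ d c2 (act h w.2) < s].
Proof.
move=> wm r_gt0 s_gt0.
have [||||g [_ [[[u v] [/= au av] <-] [/= gu gv]]]] :=
  wm ([set y | d a.1 y < r] `*` [set y | d a.2 y < r])
     ([set y | d c1 y < s] `*` [set y | d c2 y < s]).
- exact: open_setX (open_ball _ _) (open_ball _ _).
- exact: open_setX (open_ball _ _) (open_ball _ _).
- by exists a; rewrite /= !dist_refl.
- by exists (c1, c2); rewrite /= !dist_refl.
have [ru ru_gt0 ruP] := continuous_dist (@act_continuous g u)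
  (ltac:(lra) : 0 < s - d c1 (act g u)).
have [rv rv_gt0 rvP] := continuous_dist (@act_continuous g v)
  (ltac:(lra) : 0 < s - d c2 (act g v)).
pose m := Num.min (Num.min ru rv) (Num.min (r - d a.1 u) (r - d a.2 v)).
have m_gt0 : 0 < m by rewrite !lt_min ru_gt0 rv_gt0 !subr_gt0 au av.
have [m_ru m_rv m_u m_v] :
    [/\ m <= ru, m <= rv, m <= r - d a.1 u & m <= r - d a.2 v].
  by rewrite /m !ge_min !lexx ?orbT.
exists (u, v), (m / 2); split; first lra.
- move=> w; rewrite /dmax /= !ge_max => /andP [uw vw].
  by have := d_tri a.1 u w.1; have := d_tri a.2 v w.2; lra.
- exists g => w; rewrite /dmax /= !ge_max => /andP [uw vw].
  have := ruP w.1 ltac:(lra); have := rvP w.2 ltac:(lra).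
  have := d_tri c1 (act g u) (act g w.1).
  by have := d_tri c2 (act g v) (act g w.2); lra.
Qed.

Lemma weakly_mixing_diag_orbit_dense (x0 : X) : weakly_mixing act ->
  exists x y, diag_orbit_dense x y.
Proof.
move=> wm.
have /choice [net netP] : forall k : nat,
    exists l, forall z, exists i, d (nth x0 l i) z < k.+1%:R^-1.
  by move=> k; apply: compact_finite_net; rewrite invr_gt0 ltr0n.
(* Index [n] encodes a scale [k] and two centres of the [1/(k+1)]-net; the
   nested balls then meet, under some [h], every product of two net balls. *)
pose dec n := odflt (0, 0, 0)%nat (unpickle n : option (nat * nat * nat)).
pose rad n : R := (dec n).1.1.+1%:R^-1.
pose c1 n := nth x0 (net (dec n).1.1) (dec n).1.2.
pose c2 n := nth x0 (net (dec n).1.1) (dec n).2.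
have dmax_refl p : dmax p p = 0 by rewrite /dmax !dist_refl maxxx.
have dmax_complete (a : nat -> X * X) (r : nat -> R) :
    (forall n m, (n <= m)%nat -> dmax (a n) (a m) <= r n) ->
    exists z, forall n, dmax (a n) z <= r n.
  move=> a_nested.
  have [z1 z1P] : exists z, forall n, d (a n).1 z <= r n.
    by apply: compact_nested_cvg => n m /a_nested; rewrite ge_max => /andP[].
  have [z2 z2P] : exists z, forall n, d (a n).2 z <= r n.
    by apply: compact_nested_cvg => n m /a_nested; rewrite ge_max => /andP[].
  by exists (z1, z2) => n; rewrite /dmax ge_max z1P z2P.
have [[x y] xyP] := @nested_balls _ dmax dmax_refl dmax_complete
  (fun n a r => exists h, forall w, dmax a w <= r ->
     d (c1 n) (act h w.1) < rad n /\ d (c2 n) (act h w.2) < rad n)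
  (x0, x0) 1 ltr01
  (fun n a r r_gt0 _ => weakly_mixing_refine a (c1 n) (c2 n) wm r_gt0
     (ltac:(by rewrite invr_gt0 ltr0n) : 0 < rad n)).
exists x, y => z1 z2 e e_gt0.
have [k _ kP] := near_infty_natSinv_lt (PosNum (ltac:(lra) : 0 < e / 2)).
have [i1 i1P] := netP k z1; have [i2 i2P] := netP k z2.
have [a [r [_ [h hP] axy]]] := xyP (pickle (k, i1, i2)).
have := hP (x, y) axy; rewrite /c1 /c2 /rad /dec pickleK /= => -[x1 y1].
have := kP k (leqnn k); rewrite /= => k_small.
exists h; rewrite d_sym in i1P; rewrite d_sym in i2P.
have := d_tri z1 (nth x0 (net k) i1) (act h x).
have := d_tri z2 (nth x0 (net k) i2) (act h y).
by set q := k.+1%:R^-1 in k_small i1P i2P x1 y1 *; split; lra.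
Qed.

(* This is where commutativity of [G] is used: [g_n (g z) = g (g_n z)]. *)
Lemma ptws_limit_act_comm (gs : nat -> G) p :
  ptws_limit (fun n => act (gs n)) p -> forall g z, p (act g z) = act g (p z).
Proof.
move=> gs_p g z; apply: dist_lt_eq => e e_gt0.
have [N1 N1P] := gs_p (act g z) (e / 2) ltac:(lra).
have [t t_gt0 tP] := continuous_dist (@act_continuous g (p z)) (ltac:(lra) : 0 < e / 2).
have [N2 N2P] := gs_p z t t_gt0.
have := N1P (maxn N1 N2) (leq_maxl _ _); rewrite -actD addrC actD.
have := tP _ (N2P (maxn N1 N2) (leq_maxr _ _)); rewrite d_sym.
by have := d_tri (p (act g z)) (act g (act (gs (maxn N1 N2)) z)) (act g (p z)); lra.
Qed.

Lemma ptws_limit_continuous_act (gs : nat -> G) p c g :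
  ptws_limit (fun n => act (gs n)) p -> {for c, continuous p} ->
  {for act g c, continuous p}.
Proof.
move=> gs_p pc.
have -> : p = act g \o p \o act (- g).
  by apply/funext => w /=; rewrite -(ptws_limit_act_comm gs_p) -actD subrr act0.
apply: continuous_comp; first exact: act_continuous.
rewrite /= -actD addNr act0.
by apply: continuous_comp => //; exact: act_continuous.
Qed.

Lemma enveloping_collapse x y : frechet_set (enveloping act) ->
  diag_orbit_dense x y ->
  exists (gs : nat -> G) p, ptws_limit (fun n => act (gs n)) p /\ p x = p y.
Proof.
move=> frechet xy_dense.
have /choice [h hP] : forall n : nat,
    exists h, d x (act h x) < n.+1%:R^-1 /\ d x (act h y) < n.+1%:R^-1.
  by move=> n; apply: xy_dense; rewrite invr_gt0 ltr0n.
pose u n : {ptws X -> X} := act (h n).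
have [p [_ p_cluster]] :=
  ptws_compact (fmap_proper_filter u eventually_filter) filterT.
have p_closure : closure (range u) p.
  by move=> B; apply: p_cluster; exists 0%nat => // n _; exists n.
have range_sub : range u `<=` enveloping act.
  by move=> f [n _ <-]; apply: subset_closure; exists (h n).
have p_env : enveloping act p.
  by apply: (closureS _ p_closure) => f [n _ <-]; exists (h n).
have [v [v_range v_p]] := frechet _ _ range_sub p_env p_closure.
have /choice [gs gsP] : forall n, exists g, v n = act g.
  by move=> n; have [m _ <-] := v_range n; exists (h m).
exists gs, p; split.
  have -> : (fun n => act (gs n)) = v :> (nat -> X -> X).
    by apply/funext => n; rewrite gsP.
  exact: ptws_cvg_limit.
have px : p x = x by apply: ptws_cluster_eq p_cluster _ => n; have [] := hP n.
have py : p y = x by apply: ptws_cluster_eq p_cluster _ => n; have [] := hP n.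
by rewrite px py.
Qed.

Lemma collapse_fixed_point x y (gs : nat -> G) p : diag_orbit_dense x y ->
  ptws_limit (fun n => act (gs n)) p -> p x = p y ->
  exists c, forall g, act g c = c.
Proof.
move=> xy_dense gs_p pxy.
have [c c_cont] := baire_one_continuity_point (fun n => @act_continuous (gs n)) gs_p x.
exists (p c) => g; rewrite -(ptws_limit_act_comm gs_p); apply: dist_lt_eq => e e_gt0.
have [t0 t0_gt0 t0P] := continuous_dist c_cont (ltac:(lra) : 0 < e / 2).
have [t1 t1_gt0 t1P] := continuous_dist (ptws_limit_continuous_act (g := g) gs_p c_cont)
  (ltac:(lra) : 0 < e / 2).
have [h []] := xy_dense c (act g c) (Num.min t0 t1) ltac:(by rewrite lt_min t0_gt0).
rewrite !lt_min => /andP [/t0P hx _] /andP [_ /t1P hy].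
rewrite !(ptws_limit_act_comm gs_p h) pxy in hx hy.
rewrite d_sym in hx.
by have := d_tri (p (act g c)) (act h (p y)) (p c); lra.
Qed.

Lemma weakly_mixing_frechet_fixed_point (x0 : X) : weakly_mixing act ->
  frechet_set (enveloping act) -> exists c, forall g, act g c = c.
Proof.
move=> wm frechet.
have [x [y xy_dense]] := weakly_mixing_diag_orbit_dense x0 wm.
have [gs [p [gs_p pxy]]] := enveloping_collapse frechet xy_dense.
exact: collapse_fixed_point xy_dense gs_p pxy.
Qed.

End Action.
End Compact.
End MetricSpace.

Lemma minimal_fixed_point_eq (G : topologicalZmodType) (X : topologicalType)
    (act : G -> X -> X) c :
  hausdorff_space X -> minimal_system act -> (forall g, act g c = c) ->
  forall y, y = c.
Proof.
move=> hX minX c_fixed y.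
have c_closed : closed [set c] := @accessible_closed_set1 X (hausdorff_accessible hX) c.
have c_inv g x : [set c] x -> [set c] (act g x) by move->; exact: c_fixed.
have [c0|cT] := minX [set c] c_closed c_inv.
  by have : [set c] c by []; rewrite c0.
by have : [set: X] y by []; rewrite -cT.
Qed.

Lemma metrizable_num (X : topologicalType) : metrizable X ->
  exists d : X -> X -> R, [/\ forall x y, 0 <= d x y,
    forall x y, d x y = 0 <-> x = y, forall x y, d x y = d y x,
    forall x y z, d x z <= d x y + d y z &
    forall A : set X, open A <->
      (forall x, A x -> exists2 e, 0 < e & [set y | d x y < e] `<=` A)].
Proof.
move=> [d [d_ge0 d_eq0 d_sym d_tri d_open]]; exists d; split=> //.
- by move=> x y; apply/RleP.
- by move=> x y z; apply/RleP.
move=> A; rewrite d_open; split=> AP x /AP [e e_gt0 eA]; exists e.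
- exact/RltP.
- by move=> y /= /RltP /eA.
- exact/RltP.
- by move=> y /= /RltP /eA.
Qed.

Theorem mainTheorem8 (G : topologicalZmodType) (X : topologicalType)
  (act : G -> X -> X) :
  compact [set: X] -> hausdorff_space X -> metrizable X ->
  [set: X] !=set0 ->
  is_action act -> minimal_system act -> weakly_mixing act -> tame act ->
  exists x : X, forall y : X, y = x.
Proof.
move=> X_compact hX /metrizable_num [d [d_ge0 d_eq0 d_sym d_tri d_open]] [x0 _]
  [act0 actD act_cont] minX wmX [_ frechet].
have [c c_fixed] := weakly_mixing_frechet_fixed_point d_ge0 d_eq0 d_sym d_tri
  d_open X_compact act0 actD act_cont x0 wmX frechet.
by exists c; exact: minimal_fixed_point_eq hX minX c_fixed.
Qed.
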